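(* For all non-negative integers $m$ and $n$, \[ \overline{ {m+n \brack n} }_{q,t} = \sum_{k=0}^{\min\{m ,n \}} t^k q^{k(k+1)/2} (-1/t;q)_{k} {m \brack k}_{q} {n \brack k}_{q}. \]
   Context: An overpartition is a partition in which the last occurrence of each distinct part size may be overlined; its weight $|\lambda|$ is the sum of its parts. $\overline{{m+n \brack n}}_{q,t}=\sum_{\lambda} t^{\#_o(\lambda)} q^{|\lambda|}$, the sum over all overpartitions $\lambda$ with largest part at most $m$ and at most $n$ parts, $\#_o(\lambda)$ being the number of overlined parts. ${a \brack b}_q=\frac{(q;q)_{a}}{(q;q)_b(q;q)_{a-b}}$ is the Gaussian polynomial and $(x;q)_k=\prod_{j=1}^k(1-xq^{j-1})$; the product $t^k(-1/t;q)_k=\prod_{j=1}^k(t+q^{j-1})$ is a polynomial in $t$. *)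

From HB Require Import structures.
From mathcomp Require Import all_boot all_order all_algebra.
From mathcomp Require Import fraction.
Set Implicit Arguments. Unset Strict Implicit. Unset Printing Implicit Defensive.
Import GRing.Theory.
Local Open Scope ring_scope.

(* Bivariate integer polynomials Z[q][t]: the outer variable is t, the inner q. *)
Definition Zqt := {poly {poly int}}.
Definition Fqt := {fraction Zqt}.

Definition qv : Fqt := @FracField.tofrac Zqt (('X : {poly int})%:P).
Definition tv : Fqt := @FracField.tofrac Zqt ('X : Zqt).

Definition qpoch (x q : Fqt) (k : nat) : Fqt := \prod_(j < k) (1 - x * q ^+ j).

(* Gaussian polynomial [a choose b]_q (used for b <= a) *)
Definition gauss (a b : nat) : Fqt :=
  qpoch qv qv a / (qpoch qv qv b * qpoch qv qv (a - b)).

(* An overpartition with largest part <= m and at most n parts is encoded as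
   a nonincreasing n-tuple of parts in {0..m} (zeros = absent parts) together
   with the set S of distinct (nonzero) part sizes whose last occurrence is
   overlined.  Weight = sum of parts, #_o = #|S|. *)
Definition overpart_gf (m n : nat) : Fqt :=
  \sum_(l : n.-tuple 'I_m.+1 | sorted (fun a b : 'I_m.+1 => b <= a)%N l)
    \sum_(S : {set 'I_m.+1} | S \subset [set i in l | i != ord0 :> 'I_m.+1])
      tv ^+ #|S| * qv ^+ (\sum_(i <- l) (i : nat))%N.

From HB Require Import structures.
From mathcomp Require Import all_boot all_order all_algebra.
From mathcomp Require Import fraction.
From mathcomp Require Import ring zify.
Set Implicit Arguments.
Unset Strict Implicit.
Unset Printing Implicit Defensive.
Import GRing.Theory.
Local Open Scope ring_scope.

(* Both sides G(m, n) satisfy G(m, 0) = G(0, n) = 1 and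
     G(m+1, n+1) = G(m, n+1) + q^(m+1) G(m+1, n) + t q^(m+1) G(m, n).
   For overpartitions, either no part equals m+1, or we remove one part m+1;
   that part may carry the overline exactly when m+1 no longer occurs, i.e.
   when the rest fits in the smaller box.  For the sum, the defect of the
   recurrence in the k-th term telescopes, thanks to the two q-Pascal rules
   and the ratio rule [m, k+1] (1 - q^(k+1)) = [m, k] (1 - q^(m-k)). *)

Section QBinomial.
Variables (R : comPzRingType) (q : R).

Definition qpochhammer (x : R) (k : nat) : R := \prod_(j < k) (1 - x * q ^+ j).

(* Unlike the quotient [gauss], this vanishes for [k > m]; no division. *)
Fixpoint qbinom (m k : nat) : R :=
  match m, k with
  | _, 0 => 1
  | 0, _.+1 => 0
  | m'.+1, k'.+1 => q ^+ k'.+1 * qbinom m' k'.+1 + qbinom m' k'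
  end.

Lemma qpochhammer0 x : qpochhammer x 0 = 1.
Proof. by rewrite /qpochhammer big_ord0. Qed.

Lemma qpochhammerS x k : qpochhammer x k.+1 = qpochhammer x k * (1 - x * q ^+ k).
Proof. by rewrite /qpochhammer big_ord_recr. Qed.

Lemma qpochhammer_qS k : qpochhammer q k.+1 = qpochhammer q k * (1 - q ^+ k.+1).
Proof. by rewrite qpochhammerS exprS. Qed.

Lemma qbinom0 m : qbinom m 0 = 1.
Proof. by case: m. Qed.

Lemma qbinom_small m k : (m < k)%N -> qbinom m k = 0.
Proof.
elim: m k => [|m IHm] [|k] //= ltmk.
by rewrite !IHm ?mulr0 ?addr0 // ltnW.
Qed.

Lemma qbinom_ratio m k :
  qbinom m k.+1 * (1 - q ^+ k.+1) = qbinom m k * (1 - q ^+ (m - k)).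
Proof.
elim: m k => [|m IHm] k; first by rewrite sub0n expr0 subrr mulr0 /= mul0r.
have [ltmk | lekm] := ltnP m k.
  by rewrite qbinom_small ?ltnS // (eqP ltmk) expr0 subrr mulr0 mul0r.
case: k lekm => [_ | j ltjm].
  rewrite /= mulrDl -mulrA IHm qbinom0 !subn0 [q ^+ m.+1]exprS; ring.
rewrite /= !mulrDl -mulrA subSS -(IHm j) IHm.
have -> : (m - j = (m - j.+1).+1)%N by rewrite subnSK.
rewrite !exprS; ring.
Qed.

Lemma qbinom_pascal m k :
  qbinom m.+1 k.+1 = qbinom m k.+1 + q ^+ (m - k) * qbinom m k.
Proof.
apply/eqP; rewrite -subr_eq0 /=.
rewrite (_ : _ - _ = qbinom m k * (1 - q ^+ (m - k)) - qbinom m k.+1 * (1 - q ^+ k.+1));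
  last by ring.
by rewrite qbinom_ratio subrr.
Qed.

Lemma qbinom_qpochhammer m k : (k <= m)%N ->
  qbinom m k * (qpochhammer q k * qpochhammer q (m - k)) = qpochhammer q m.
Proof.
elim: k => [_ | k IHk ltkm]; first by rewrite qbinom0 qpochhammer0 subn0 !mul1r.
rewrite -(IHk (ltnW ltkm)) -(subnSK ltkm) !qpochhammer_qS.
rewrite (_ : qbinom m k.+1 * _
    = qbinom m k.+1 * (1 - q ^+ k.+1) * (qpochhammer q k * qpochhammer q (m - k.+1)));
  last by ring.
by rewrite qbinom_ratio subnSK //; ring.
Qed.

End QBinomial.

Section QBinomialField.
Variables (F : fieldType) (q : F).
Hypothesis qfact_neq0 : forall j, 1 - q ^+ j.+1 != 0.

Lemma qpochhammer_q_neq0 k : qpochhammer q q k != 0.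
Proof. by rewrite prodf_seq_neq0; apply/allP => j _; rewrite /= -exprS. Qed.

Lemma qbinomE m k : (k <= m)%N ->
  qbinom q m k = qpochhammer q q m / (qpochhammer q q k * qpochhammer q q (m - k)).
Proof.
move=> lekm; rewrite -(qbinom_qpochhammer q lekm) mulfK //.
by rewrite mulf_neq0 ?qpochhammer_q_neq0.
Qed.

End QBinomialField.

Section QBinomialPairSum.
Variables (R : comPzRingType) (q t : R).

(* t^k q^(k(k+1)/2) (-1/t; q)_k as a polynomial in t, see [overpart_coefE]. *)
Definition overpart_coef (k : nat) : R := \prod_(j < k) (q ^+ j.+1 * (t + q ^+ j)).

Lemma overpart_coef0 : overpart_coef 0 = 1.
Proof. by rewrite /overpart_coef big_ord0. Qed.

Lemma overpart_coefS k :
  overpart_coef k.+1 = overpart_coef k * (q ^+ k.+1 * (t + q ^+ k)).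
Proof. by rewrite /overpart_coef big_ord_recr. Qed.

Definition qbinom_pair_sum (N m n : nat) : R :=
  \sum_(0 <= k < N) overpart_coef k * qbinom q m k * qbinom q n k.

Definition qbinom_pair_defect (m n k : nat) : R :=
  qbinom q m.+1 k * qbinom q n.+1 k - qbinom q m k * qbinom q n.+1 k
  - q ^+ m.+1 * qbinom q m.+1 k * qbinom q n k
  - t * q ^+ m.+1 * qbinom q m k * qbinom q n k.

Definition qbinom_pair_defect_primitive (m n k : nat) : R :=
  if k is j.+1
  then q ^+ m.+1 * overpart_coef j * (t + q ^+ j) * qbinom q m j * qbinom q n j
  else 0.

Lemma qbinom_pair_defect_telescope m n k :
  overpart_coef k * qbinom_pair_defect m n k
  = qbinom_pair_defect_primitive m n k - qbinom_pair_defect_primitive m n k.+1.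
Proof.
rewrite /qbinom_pair_defect /qbinom_pair_defect_primitive.
case: k => [|j]; first by rewrite overpart_coef0 !qbinom0 /= !mulr1 expr0 exprS; ring.
have [ltmj | lejm] := ltnP m j.
  rewrite (qbinom_small q ltmj) (qbinom_small q (leqW ltmj)).
  by rewrite (qbinom_small q (ltmj : m.+1 < j.+1)%N); ring.
have [e ->] : exists e, m = (j + e)%N by exists (m - j)%N; rewrite subnKC.
have ratio_m := qbinom_ratio q (j + e) j; have ratio_n := qbinom_ratio q n j.
rewrite addKn in ratio_m; rewrite overpart_coefS !qbinom_pascal addKn.
apply/eqP; rewrite -subr_eq0; apply/eqP.
(* The difference is a combination of the ratio rules for [m] and [n]. *)
transitivity (overpart_coef j * (t + q ^+ j) * q ^+ j.+1 *
  (q ^+ e * qbinom q (j + e) j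
     * (qbinom q n j.+1 * (1 - q ^+ j.+1) - qbinom q n j * (1 - q ^+ (n - j)))
   - q ^+ (j + e).+1 * qbinom q n j.+1
     * (qbinom q (j + e) j.+1 * (1 - q ^+ j.+1) - qbinom q (j + e) j * (1 - q ^+ e)))).
  by rewrite !exprS exprD; ring.
by rewrite ratio_m ratio_n !subrr !mulr0 subrr mulr0.
Qed.

Lemma qbinom_pair_sum_rec N m n : (m.+1 < N)%N ->
  qbinom_pair_sum N m.+1 n.+1 = qbinom_pair_sum N m n.+1
    + q ^+ m.+1 * qbinom_pair_sum N m.+1 n + t * q ^+ m.+1 * qbinom_pair_sum N m n.
Proof.
case: N => // N ltmN.
have defect_sum : \sum_(0 <= k < N.+1) overpart_coef k * qbinom_pair_defect m n k
    = qbinom_pair_sum N.+1 m.+1 n.+1 - qbinom_pair_sum N.+1 m n.+1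
      - q ^+ m.+1 * qbinom_pair_sum N.+1 m.+1 n - t * q ^+ m.+1 * qbinom_pair_sum N.+1 m n.
  rewrite !mulr_sumr -!sumrB; apply: eq_bigr => k _.
  by rewrite /qbinom_pair_defect; ring.
have defect_sum0 : \sum_(0 <= k < N.+1) overpart_coef k * qbinom_pair_defect m n k = 0.
  rewrite (@telescope_sumr_eq _ _ _ (fun k => - qbinom_pair_defect_primitive m n k)) //.
    by rewrite /= (qbinom_small q (ltmN : (m < N)%N)) mulr0 mul0r oppr0 subr0.
  by move=> k _; rewrite qbinom_pair_defect_telescope opprK addrC.
by apply/eqP; rewrite -subr_eq0 !opprD !addrA -defect_sum defect_sum0.
Qed.

Lemma qbinom_pair_sum_0n N n : (0 < N)%N -> qbinom_pair_sum N 0 n = 1.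
Proof.
case: N => // N _; rewrite /qbinom_pair_sum big_nat_recl // big1 => [|k _].
  by rewrite overpart_coef0 !qbinom0 !mulr1 addr0.
by rewrite /= mulr0 mul0r.
Qed.

Lemma qbinom_pair_sum_m0 N m : (0 < N)%N -> qbinom_pair_sum N m 0 = 1.
Proof.
case: N => // N _; rewrite /qbinom_pair_sum big_nat_recl // big1 => [|k _].
  by rewrite overpart_coef0 !qbinom0 !mulr1 addr0.
by rewrite /= mulr0.
Qed.

Lemma qbinom_pair_sum_min N m n : (minn m n < N)%N ->
  qbinom_pair_sum N m n = qbinom_pair_sum (minn m n).+1 m n.
Proof.
move=> ltminN; rewrite /qbinom_pair_sum (big_cat_nat (leq0n _) ltminN) /=.
rewrite [X in _ + X]big1_seq ?addr0 // => k /andP[_].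
rewrite mem_index_iota => /andP[ltmink _].
have [ltmk | ltnk] : (m < k)%N \/ (n < k)%N by lia.
  by rewrite (qbinom_small q ltmk) mulr0 mul0r.
by rewrite (qbinom_small q ltnk) mulr0.
Qed.

End QBinomialPairSum.

Lemma overpart_coefE (F : fieldType) (q t : F) k : t != 0 ->
  overpart_coef q t k = t ^+ k * q ^+ ((k * k.+1) %/ 2) * qpochhammer q (- t^-1) k.
Proof.
move=> t_neq0; elim: k => [|k IHk].
  by rewrite overpart_coef0 qpochhammer0 !mulr1.
have -> : ((k.+1 * k.+2) %/ 2 = (k * k.+1) %/ 2 + k.+1)%N.
  by rewrite (_ : k.+1 * k.+2 = k.+1 * 2 + k * k.+1)%N ?divnMDl 1?addnC //; lia.
by rewrite overpart_coefS IHk qpochhammerS exprD !exprS; field.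
Qed.

Fixpoint box_partitions (m n : nat) {struct n} : seq (seq nat) :=
  if n is n'.+1 then [seq a :: s | a <- iota 0 m.+1, s <- box_partitions a n']
  else [:: [::]].

Lemma mem_box_partitions m n s :
  (s \in box_partitions m n) = [&& size s == n, sorted geq s & all (leq^~ m) s].
Proof.
elim: n m s => [|n IHn] m [|a s] //.
  by apply/allpairsPdep => -[b [s' [_ _]]].
have -> : (a :: s \in box_partitions m n.+1) = (a <= m)%N && (s \in box_partitions a n).
  apply/allpairsPdep/andP => [[b [s' [bm s's [-> ->]]]] | [am sa]].
    by move: bm; rewrite mem_iota add0n ltnS.
  by exists a, s; rewrite mem_iota add0n ltnS.
rewrite IHn /= (path_sortedE (fun _ _ _ h1 h2 => leq_trans h2 h1)).
case am: (a <= m)%N; rewrite ?andbF //.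
case sa: (all (leq^~ a) s); rewrite ?andbF //=.
by rewrite (sub_all (fun x xa => leq_trans xa am) sa) !andbT.
Qed.

Lemma uniq_box_partitions m n : uniq (box_partitions m n).
Proof.
elim: n m => [|n IHn] m //.
apply: (@allpairs_uniq_dep _ (fun=> seq nat)) => [|a _|].
- exact: iota_uniq.
- exact: IHn.
- by move=> [a s] [b s'] _ _ /= [-> ->].
Qed.

Lemma box_partitions_0n n : box_partitions 0 n = [:: nseq n 0%N].
Proof. by elim: n => //= n ->. Qed.

Lemma box_partitionsSS m n : box_partitions m.+1 n.+1
  = box_partitions m n.+1 ++ [seq m.+1 :: s | s <- box_partitions m.+1 n].
Proof.
rewrite {1}/box_partitions -/box_partitions -[m.+2]addn1 iotaD allpairs_cat.
by congr (_ ++ _); rewrite add0n /= cats0.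
Qed.

Lemma perm_box_partitions_notin m n :
  perm_eq [seq s <- box_partitions m.+1 n | m.+1 \notin s] (box_partitions m n).
Proof.
apply: uniq_perm; rewrite ?filter_uniq ?uniq_box_partitions // => s.
rewrite mem_filter !mem_box_partitions.
have -> : all (leq^~ m) s = (m.+1 \notin s) && all (leq^~ m.+1) s.
  elim: s => //= a s ->; rewrite in_cons negb_or -ltnS ltn_neqAle eq_sym.
  by case: (m.+1 \in s); rewrite /= ?andbF ?andbT ?andbA.
by case: (m.+1 \in s); rewrite /= ?andbF ?andbT ?andbA.
Qed.

Section OverpartitionWeight.
Variables (R : comPzRingType) (q t : R).

(* The factor 1 + t sums over overlining or not each distinct nonzero part. *)
Definition overpart_weight (s : seq nat) : R :=
  (1 + t) ^+ size (undup [seq a <- s | a != 0%N]) * q ^+ sumn s.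

Lemma overpart_weight_nseq0 n : overpart_weight (nseq n 0%N) = 1.
Proof. by rewrite /overpart_weight; elim: n => [|n IHn]; rewrite ?mulr1. Qed.

Lemma overpart_weight_cons a s : (0 < a)%N ->
  overpart_weight (a :: s) = q ^+ a * (if a \in s then 1 else 1 + t) * overpart_weight s.
Proof.
rewrite lt0n => a_neq0.
rewrite /overpart_weight /= a_neq0 /= mem_filter a_neq0 /= exprD.
by case: (a \in s); rewrite /= ?exprS; ring.
Qed.

Definition overpart_seq_gf (m n : nat) : R :=
  \sum_(s <- box_partitions m n) overpart_weight s.

Lemma overpart_seq_gf_0n n : overpart_seq_gf 0 n = 1.
Proof. by rewrite /overpart_seq_gf box_partitions_0n big_seq1 overpart_weight_nseq0. Qed.

Lemma overpart_seq_gf_m0 m : overpart_seq_gf m 0 = 1.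
Proof. by rewrite /overpart_seq_gf big_seq1; exact: (overpart_weight_nseq0 0). Qed.

Lemma overpart_seq_gf_rec m n : overpart_seq_gf m.+1 n.+1 = overpart_seq_gf m n.+1
  + q ^+ m.+1 * overpart_seq_gf m.+1 n + t * q ^+ m.+1 * overpart_seq_gf m n.
Proof.
rewrite /overpart_seq_gf box_partitionsSS big_cat big_map -addrA; congr (_ + _).
rewrite -(perm_big _ (perm_box_partitions_notin m n)) big_filter.
rewrite 2!mulr_sumr [X in _ = _ + X]big_mkcond -big_split.
apply: eq_bigr => s _; rewrite overpart_weight_cons //.
by case: (m.+1 \in s); rewrite /=; ring.
Qed.

End OverpartitionWeight.

Lemma overpart_seq_gf_qbinom (R : comPzRingType) (q t : R) N m n : (m < N)%N ->
  overpart_seq_gf q t m n = qbinom_pair_sum q t N m n.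
Proof.
elim: m n => [|m IHm] n ltmN; first by rewrite overpart_seq_gf_0n qbinom_pair_sum_0n.
have [lt0N ltmN'] := (ltn_trans (ltn0Sn m) ltmN, ltnW ltmN).
elim: n => [|n IHn]; first by rewrite overpart_seq_gf_m0 qbinom_pair_sum_m0.
by rewrite overpart_seq_gf_rec qbinom_pair_sum_rec // IHn !IHm.
Qed.

Lemma sum_subset_exp (R : comPzRingType) (T : finType) (B : {set T}) (x : R) :
  \sum_(S : {set T} | S \subset B) x ^+ #|S| = (1 + x) ^+ #|B|.
Proof.
have -> : (1 + x) ^+ #|B| = \prod_i ((if i \in B then x else 0) + 1).
  rewrite -prodr_const big_mkcond; apply: eq_bigr => i _.
  by case: (i \in B); rewrite ?add0r // addrC.
rewrite bigA_distr [LHS]big_mkcond; apply: eq_bigr => S _.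
case: (boolP (S \subset B)) => [sSB | /subsetPn[i iS iB]].
  rewrite -prodr_const big_mkcond; apply: eq_bigr => i _.
  by case: (boolP (i \in S)) => // /(subsetP sSB) ->.
by rewrite (bigD1 i) //= iS (negbTE iB) mul0r.
Qed.

Lemma big_sorted_tuples (R : nmodType) m n (f : seq nat -> R) :
  \sum_(l : n.-tuple 'I_m.+1 | sorted (fun a b : 'I_m.+1 => (b <= a)%N) l) f (map val l)
  = \sum_(s <- box_partitions m n) f s.
Proof.
rewrite -big_filter -(big_map (fun l : n.-tuple 'I_m.+1 => map val l) xpredT f).
apply/perm_big/uniq_perm; rewrite ?uniq_box_partitions //.
  rewrite map_inj_uniq ?filter_uniq ?index_enum_uniq //.
  by move=> l l' /(inj_map val_inj) /val_inj.
move=> s; rewrite mem_box_partitions.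
apply/mapP/and3P => [[l] | [/eqP size_s sorted_s le_s_m]].
  rewrite mem_filter => /andP[sorted_l _] ->.
  rewrite size_map size_tuple sorted_map sorted_l; split=> //.
  by rewrite all_map; apply/allP => i _; rewrite /= -ltnS ltn_ord.
have size_inord : size (map (@inord m) s) == n by rewrite size_map size_s.
have val_inord : map val (Tuple size_inord) = s.
  rewrite /= -map_comp; apply: map_id_in => a a_s /=.
  by rewrite inordK // ltnS (allP le_s_m a a_s).
have sorted_inord : sorted geq (map val (Tuple size_inord)) by rewrite val_inord.
exists (Tuple size_inord) => //.
by rewrite mem_filter mem_index_enum andbT; rewrite sorted_map in sorted_inord.
Qed.

Lemma overpart_weight_val (R : comPzRingType) (q t : R) m (l : seq 'I_m.+1) :
  (1 + t) ^+ #|[set i in l | i != ord0]| * q ^+ (\sum_(i <- l) (i : nat))%N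
  = overpart_weight q t (map val l).
Proof.
rewrite /overpart_weight sumnE big_map filter_map.
rewrite undup_map_inj ?size_map; last exact: val_inj.
rewrite -(card_uniqP (undup_uniq _)); congr (_ ^+ _ * _); apply: eq_card => i.
by rewrite inE mem_undup mem_filter andbC.
Qed.

Lemma tv_neq0 : tv != 0.
Proof. by rewrite /tv tofrac_eq0 polyX_eq0. Qed.

Lemma qv_qfact_neq0 j : 1 - qv ^+ j.+1 != 0.
Proof.
rewrite /qv -tofracXn -tofrac1 -tofracB tofrac_eq0 -rmorphXn -polyCB polyC_eq0.
apply/eqP => /(congr1 (fun p : {poly int} => p`_0)).
by rewrite coefB coef1 coefXn /= coef0.
Qed.

Lemma overpart_gf_seq m n : overpart_gf m n = overpart_seq_gf qv tv m n.
Proof.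
rewrite /overpart_gf /overpart_seq_gf -big_sorted_tuples; apply: eq_bigr => l _.
by rewrite -mulr_suml sum_subset_exp overpart_weight_val.
Qed.

Theorem proposition2p5 (m n : nat) :
  overpart_gf m n =
  \sum_(0 <= k < (minn m n).+1)
    tv ^+ k * qv ^+ ((k * k.+1) %/ 2)%N * qpoch (- tv^-1) qv k
      * gauss m k * gauss n k.
Proof.
rewrite overpart_gf_seq (overpart_seq_gf_qbinom _ _ _ (ltnSn m)).
rewrite qbinom_pair_sum_min ?ltnS ?geq_minl //.
apply: eq_big_nat => k /andP[_]; rewrite ltnS leq_min => /andP[lekm lekn].
by rewrite overpart_coefE ?tv_neq0 // !(qbinomE qv_qfact_neq0).
Qed.
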